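(* Let $\Gamma$ be a cofinite graph and let $\Sigma$ be a uniform subgraph of $\Gamma$ (a subgraph with the subspace uniformity, which is itself a cofinite graph). Then: (1) If $\Sigma$ is path connected, then $\Sigma$ is cofinitely connected. (2) If $\Sigma$ is cofinitely connected, then so is its closure $\overline{\Sigma}$ in $\Gamma$ (which is a cofinite subgraph of $\Gamma$). (3) If $\Sigma$ is cofinitely connected and $f\colon\Gamma\to\Delta$ is a uniformly continuous map of graphs into a cofinite graph $\Delta$, then $f(\Sigma)$ is cofinitely connected as a cofinite subgraph of $\Delta$.
   Context: A graph $\Gamma$ is a set $\Gamma=V(\Gamma)\sqcup E(\Gamma)$ with maps $s,t\colon E(\Gamma)\to V(\Gamma)$ and a fixed-point-free involution $e\mapsto\overline e$ of $E(\Gamma)$ with $s(\overline e)=t(e)$, $t(\overline e)=s(e)$. A subgraph is a subset closed under $s,t$ and $e\mapsto\overline e$. A map of graphs sends vertices to vertices and edges to edges and commutes with $s$, $t$ and $e\mapsto\overline e$. An equivalence relation $R$ on a graph is compatible if $R\subseteq (V\times V)\cup(E\times E)$, $(e,e')\in R$ implies $(s(e),s(e')),(t(e),t(e')),(\overline e,\overline{e'})\in R$, and $(e,\overline e)\notin R$ for all edges $e$; then $\Gamma/R$ is a graph. A cofinite entourage is an entourage that is an equivalence relation with finitely many classes. A cofinite graph is a graph with a Hausdorff uniformity in which the compatible cofinite entourages form a fundamental system of entourages. A graph is path connected if any two vertices are joined by a finite path of edges $e_1\cdots e_n$ with $t(e_i)=s(e_{i+1})$. A cofinite graph is cofinitely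 connected if $\Gamma/R$ is path connected for every compatible cofinite entourage $R$. *)

From Stdlib Require Import List.
Set Implicit Arguments.

Record graph := Graph {
  gV : Type;
  gE : Type;
  gs : gE -> gV;
  gt : gE -> gV;
  grev : gE -> gE;
  grevK : forall e, grev (grev e) = e;
  grev_neq : forall e, grev e <> e;
  gs_rev : forall e, gs (grev e) = gt e;
  gt_rev : forall e, gt (grev e) = gs e
}.
Arguments gs {g} _.
Arguments gt {g} _.
Arguments grev {g} _.

(** The underlying set Gamma = V(Gamma) disjoint-union E(Gamma). *)
Definition pt (G : graph) : Type := (gV G + gE G)%type.

Definition rel (X : Type) := X -> X -> Prop.

Definition subgraph (G : graph) (S : pt G -> Prop) : Prop :=
  forall e, S (inr e) ->
    S (inl (gs e)) /\ S (inl (gt e)) /\ S (inr (grev e)).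

Record is_uniformity (X : Type) (U : rel X -> Prop) : Prop := {
  unif_total : U (fun _ _ => True);
  unif_up : forall D D', U D -> (forall x y, D x y -> D' x y) -> U D';
  unif_inter : forall D D', U D -> U D' -> U (fun x y => D x y /\ D' x y);
  unif_refl : forall D x, U D -> D x x;
  unif_sym : forall D, U D -> U (fun x y => D y x);
  unif_half : forall D, U D ->
    exists D', U D' /\ forall x y z, D' x y -> D' y z -> D x z
}.

Definition hausdorff (X : Type) (U : rel X -> Prop) : Prop :=
  forall x y, (forall D, U D -> D x y) -> x = y.

(** Notions relative to a subset S of the underlying set of a graph
    (S = everything for the whole graph). *)

Definition equiv_on (X : Type) (S : X -> Prop) (R : rel X) : Prop :=
  (forall x, S x -> R x x) /\
  (forall x y, S x -> S y -> R x y -> R y x) /\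
  (forall x y z, S x -> S y -> S z -> R x y -> R y z -> R x z).

Definition finite_classes_on (X : Type) (S : X -> Prop) (R : rel X) : Prop :=
  exists l : list X, (forall y, In y l -> S y) /\
    forall x, S x -> exists y, In y l /\ R x y.

Definition compatible_on (G : graph) (S : pt G -> Prop) (R : rel (pt G)) : Prop :=
  (forall v e, S (inl v) -> S (inr e) ->
      ~ R (inl v) (inr e) /\ ~ R (inr e) (inl v)) /\
  (forall e e', S (inr e) -> S (inr e') -> R (inr e) (inr e') ->
      R (inl (gs e)) (inl (gs e')) /\ R (inl (gt e)) (inl (gt e')) /\
      R (inr (grev e)) (inr (grev e'))) /\
  (forall e, S (inr e) -> ~ R (inr e) (inr (grev e))).

Definition full (X : Type) : X -> Prop := fun _ => True.

Definition cofinite_graph (G : graph) (U : rel (pt G) -> Prop) : Prop :=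
  is_uniformity U /\ hausdorff U /\
  forall D, U D -> exists R, U R /\ equiv_on (@full _) R /\
     finite_classes_on (@full _) R /\ compatible_on (@full _) R /\
     (forall x y, R x y -> D x y).

(** Entourages of the subspace uniformity on S. *)
Definition sub_entourage (X : Type) (U : rel X -> Prop) (S : X -> Prop)
  (D : rel X) : Prop :=
  exists D0, U D0 /\ forall x y, S x -> S y -> D0 x y -> D x y.

(** Walk in S from v to w along edges e1 ... en, where consecutive incidences
    are taken modulo R: s(e1) R v ... (in S/R: a path of edge classes). *)
Fixpoint walk (G : graph) (S : pt G -> Prop) (R : rel (pt G))
  (v : gV G) (l : list (gE G)) (w : gV G) : Prop :=
  match l with
  | nil => R (inl v) (inl w)
  | e :: l' => S (inr e) /\ R (inl v) (inl (gs e)) /\ walk S R (gt e) l' w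
  end.

Definition path_connected (G : graph) (S : pt G -> Prop) : Prop :=
  forall v w, S (inl v) -> S (inl w) ->
    exists l, walk S (fun x y => x = y) v l w.

Definition quotient_path_connected (G : graph) (S : pt G -> Prop)
  (R : rel (pt G)) : Prop :=
  forall v w, S (inl v) -> S (inl w) -> exists l, walk S R v l w.

Definition cofinitely_connected (G : graph) (U : rel (pt G) -> Prop)
  (S : pt G -> Prop) : Prop :=
  forall R, sub_entourage U S R -> equiv_on S R -> finite_classes_on S R ->
    compatible_on S R -> quotient_path_connected S R.

Definition closure (X : Type) (U : rel X -> Prop) (S : X -> Prop) : X -> Prop :=
  fun x => forall D, U D -> exists y, S y /\ D x y.

Definition graph_map {G H : graph} (fV : gV G -> gV H) (fE : gE G -> gE H) : Prop :=
  forall e, gs (fE e) = fV (gs e) /\ gt (fE e) = fV (gt e) /\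
            fE (grev e) = grev (fE e).

Definition gmap {G H : graph} (fV : gV G -> gV H) (fE : gE G -> gE H)
  (x : pt G) : pt H :=
  match x with inl v => inl (fV v) | inr e => inr (fE e) end.

Definition unif_continuous (X Y : Type) (UX : rel X -> Prop) (UY : rel Y -> Prop)
  (f : X -> Y) : Prop :=
  forall D, UY D -> UX (fun x y => D (f x) (f y)).

Definition image (X Y : Type) (f : X -> Y) (S : X -> Prop) : Y -> Prop :=
  fun y => exists x, S x /\ f x = y.

From Stdlib Require Import List Classical.
Set Implicit Arguments.
Unset Strict Implicit.

(* (1) is immediate, since a genuine path is a path modulo any reflexive R.
   For (2) and (3) one pulls a compatible cofinite entourage R of the bigger
   set back to S: restricting R from the closure to S, resp. composing R with
   f, again gives a compatible cofinite entourage of S.  Cofinite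
   connectedness of S then yields paths modulo R in S; in the closure every
   vertex is R-equivalent to a vertex of S (R is an entourage and never
   relates a vertex to an edge), and in the image the paths are pushed
   forward along f. *)

Lemma walk_of_path (G : graph) (S : pt G -> Prop) (R : rel (pt G)) :
  subgraph S -> (forall x, S x -> R x x) ->
  forall l v w, S (inl w) ->
  walk S (fun x y => x = y) v l w -> walk S R v l w.
Proof.
  intros HS Hrefl l; induction l as [|e l IH]; simpl; intros v w Hw Hwalk.
  - injection Hwalk as ->. auto.
  - destruct Hwalk as [He [Hs Hwalk]]. injection Hs as ->.
    destruct (HS e He) as [Hse [Hte _]]. auto.
Qed.

Lemma walk_retarget (G : graph) (S C : pt G -> Prop) (R : rel (pt G)) :
  subgraph S -> (forall x, S x -> C x) -> equiv_on C R ->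
  forall l v w v0 w0, walk S R v l w ->
  C (inl v0) -> C (inl w0) -> S (inl v) -> S (inl w) ->
  R (inl v0) (inl v) -> R (inl w) (inl w0) -> walk C R v0 l w0.
Proof.
  intros HS HSC [Hrefl [_ Htrans]] l; induction l as [|e l IH]; simpl;
    intros v w v0 w0 Hwalk Hv0 Hw0 Hv Hw Rv0 Rw0.
  - assert (R (inl v0) (inl w)) by (apply Htrans with (inl v); auto).
    apply Htrans with (inl w); auto.
  - destruct Hwalk as [He [Hs Hwalk]].
    destruct (HS e He) as [Hse [Hte _]].
    split; [auto | split].
    + apply Htrans with (inl v); auto.
    + apply IH with (gt e) w; auto.
Qed.

Lemma walk_map (G H : graph) (fV : gV G -> gV H) (fE : gE G -> gE H)
  (S : pt G -> Prop) (R : rel (pt H)) :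
  graph_map fV fE ->
  forall l v w, walk S (fun x y => R (gmap fV fE x) (gmap fV fE y)) v l w ->
  walk (image (gmap fV fE) S) R (fV v) (map fE l) (fV w).
Proof.
  intros Hf l; induction l as [|e l IH]; simpl; intros v w Hwalk.
  - exact Hwalk.
  - destruct Hwalk as [He [Hs Hwalk]]. destruct (Hf e) as [Es [Et _]].
    split; [exists (inr e); auto |].
    rewrite Es, Et. auto.
Qed.

Lemma path_connected_cofinitely_connected (G : graph)
  (U : rel (pt G) -> Prop) (S : pt G -> Prop) :
  subgraph S -> path_connected S -> cofinitely_connected U S.
Proof.
  intros HS Hpath R _ [Hrefl _] _ _ v w Hv Hw.
  destruct (Hpath v w Hv Hw) as [l Hl].
  exists l. apply walk_of_path; auto.
Qed.

Section Restriction.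

Variables (X : Type) (S C : X -> Prop) (R : rel X).
Hypothesis subSC : forall x, S x -> C x.

Lemma equiv_on_sub : equiv_on C R -> equiv_on S R.
Proof.
  intros [Hrefl [Hsym Htrans]].
  split; [| split]; intros; [apply Hrefl | apply Hsym | apply Htrans with y]; auto.
Qed.

Lemma sub_entourage_sub (U : rel X -> Prop) :
  sub_entourage U C R -> sub_entourage U S R.
Proof. intros [D0 [HD0 HD]]. exists D0; auto. Qed.

(* Each class meeting S is represented by some element of S; this needs
   excluded middle to decide whether a class meets S at all. *)
Lemma finite_classes_on_sub :
  equiv_on C R -> finite_classes_on C R -> finite_classes_on S R.
Proof.
  intros [_ [Hsym Htrans]] [l [HlC Hcover]].
  assert (Hreps : forall l, (forall y, In y l -> C y) ->
    exists l', (forall z, In z l' -> S z) /\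
      forall y, In y l -> forall x, S x -> R x y -> exists z, In z l' /\ R x z).
  { clear Hcover HlC l. intro l; induction l as [|y l IH]; intros HlC.
    - exists nil. split; intros ? [].
    - destruct IH as [l' [Hl'S Hl']]; [intros; apply HlC; simpl; auto |].
      destruct (classic (exists x0, S x0 /\ R x0 y)) as [[x0 [Sx0 Rx0]] | Hnone].
      + exists (x0 :: l'). split; [intros z [<- | Hz]; auto |].
        intros z [<- | Hz] x Sx Rx.
        * exists x0. split; [left; reflexivity |].
          assert (Cy : C y) by (apply HlC; left; reflexivity).
          apply Htrans with y; auto.
        * destruct (Hl' z Hz x Sx Rx) as [u [Hu Ru]]. exists u. split; [right |]; auto.
      + exists l'. split; auto.
        intros z [<- | Hz] x Sx Rx; [exfalso; eauto | eauto]. }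
  destruct (Hreps l HlC) as [l' [Hl'S Hl']].
  exists l'. split; auto.
  intros x Sx. destruct (Hcover x (subSC Sx)) as [y [Hy Ry]]. eauto.
Qed.

End Restriction.

Lemma compatible_on_sub (G : graph) (S C : pt G -> Prop) (R : rel (pt G)) :
  (forall x, S x -> C x) -> compatible_on C R -> compatible_on S R.
Proof. intros HSC [H1 [H2 H3]]. split; [| split]; auto. Qed.

Lemma subset_closure (X : Type) (U : rel X -> Prop) (S : X -> Prop) :
  is_uniformity U -> forall x, S x -> closure U S x.
Proof. intros HU x Sx D HD. exists x. split; [| apply (unif_refl HU)]; auto. Qed.

Lemma closure_vertex_equiv (G : graph) (U : rel (pt G) -> Prop)
  (S : pt G -> Prop) (R : rel (pt G)) :
  is_uniformity U -> sub_entourage U (closure U S) R ->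
  compatible_on (closure U S) R ->
  forall u, closure U S (inl u) -> exists u', S (inl u') /\ R (inl u) (inl u').
Proof.
  intros HU [D0 [HD0 HD]] [Hve _] u Hu.
  destruct (Hu D0 HD0) as [[u' | e] [Sy Dy]].
  - exists u'. split; [| apply HD]; auto using subset_closure.
  - exfalso. apply (proj1 (Hve u e Hu (subset_closure HU Sy))).
    apply HD; auto using subset_closure.
Qed.

Lemma cofinitely_connected_closure (G : graph) (U : rel (pt G) -> Prop)
  (S : pt G -> Prop) :
  is_uniformity U -> subgraph S ->
  cofinitely_connected U S -> cofinitely_connected U (closure U S).
Proof.
  intros HU HS Hconn R Hent Heq Hfin Hcomp v w Hv Hw.
  pose proof (subset_closure (S := S) HU) as HSC.
  assert (HQ : quotient_path_connected S R).
  { apply Hconn.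
    - exact (sub_entourage_sub HSC Hent).
    - exact (equiv_on_sub HSC Heq).
    - exact (finite_classes_on_sub HSC Heq Hfin).
    - exact (compatible_on_sub HSC Hcomp). }
  destruct (closure_vertex_equiv HU Hent Hcomp Hv) as [v' [Sv' Rv']].
  destruct (closure_vertex_equiv HU Hent Hcomp Hw) as [w' [Sw' Rw']].
  destruct (HQ v' w' Sv' Sw') as [l Hl].
  exists l. apply walk_retarget with S v' w'; auto.
  destruct Heq as [_ [Hsym _]]. auto.
Qed.

Section Pullback.

Variables (G H : graph) (fV : gV G -> gV H) (fE : gE G -> gE H).
Variables (S : pt G -> Prop) (R : rel (pt H)).

Local Notation f := (gmap fV fE).
Local Notation fS := (image f S).
Local Notation Rf := (fun x y => R (f x) (f y)).

Lemma image_mem x : S x -> fS (f x).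
Proof. intros Sx. exists x. auto. Qed.

Lemma equiv_on_pullback : equiv_on fS R -> equiv_on S Rf.
Proof.
  intros [Hrefl [Hsym Htrans]].
  split; [| split]; intros.
  - apply Hrefl, image_mem; auto.
  - apply Hsym; auto using image_mem.
  - apply Htrans with (f y); auto using image_mem.
Qed.

Lemma finite_classes_on_pullback : finite_classes_on fS R -> finite_classes_on S Rf.
Proof.
  intros [l [HlS Hcover]].
  assert (Hpre : forall l, (forall y, In y l -> fS y) ->
    exists l', (forall x, In x l' -> S x) /\
      forall y, In y l -> exists x, In x l' /\ f x = y).
  { clear Hcover HlS l. intro l; induction l as [|y l IH]; intros HlS.
    - exists nil. split; intros ? [].
    - destruct IH as [l' [Hl'S Hl']]; [intros; apply HlS; simpl; auto |].
      destruct (HlS y (or_introl eq_refl)) as [x [Sx Fx]].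
      exists (x :: l'). split; [intros z [<- | Hz]; auto |].
      intros z [<- | Hz].
      + exists x. split; [left |]; auto.
      + destruct (Hl' z Hz) as [u [Hu Fu]]. exists u. split; [right |]; auto. }
  destruct (Hpre l HlS) as [l' [Hl'S Hl']].
  exists l'. split; auto.
  intros x Sx. destruct (Hcover _ (image_mem Sx)) as [y [Hy Ry]].
  destruct (Hl' y Hy) as [x' [Hx' Fx']].
  exists x'. split; auto. rewrite Fx'. exact Ry.
Qed.

Lemma compatible_on_pullback :
  graph_map fV fE -> compatible_on fS R -> compatible_on S Rf.
Proof.
  intros Hf [Hve [Hee Hrev]].
  split; [| split].
  - intros v e Sv Se. exact (Hve (fV v) (fE e) (image_mem Sv) (image_mem Se)).
  - intros e e' Se Se' Re.
    destruct (Hf e) as [Es [Et Er]]. destruct (Hf e') as [Es' [Et' Er']].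
    simpl. rewrite Er, Er', <- Es, <- Es', <- Et, <- Et'.
    exact (Hee (fE e) (fE e') (image_mem Se) (image_mem Se') Re).
  - intros e Se. destruct (Hf e) as [_ [_ Er]]. simpl. rewrite Er.
    exact (Hrev (fE e) (image_mem Se)).
Qed.

Lemma sub_entourage_pullback (U : rel (pt G) -> Prop) (UH : rel (pt H) -> Prop) :
  unif_continuous U UH f -> sub_entourage UH fS R -> sub_entourage U S Rf.
Proof.
  intros Hf [D0 [HD0 HD]].
  exists (fun x y => D0 (f x) (f y)). split; [apply Hf; auto |].
  intros x y Sx Sy Dxy. apply HD; auto using image_mem.
Qed.

End Pullback.

Lemma cofinitely_connected_image (G H : graph) (U : rel (pt G) -> Prop)
  (UH : rel (pt H) -> Prop) (fV : gV G -> gV H) (fE : gE G -> gE H)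
  (S : pt G -> Prop) :
  graph_map fV fE -> unif_continuous U UH (gmap fV fE) ->
  cofinitely_connected U S -> cofinitely_connected UH (image (gmap fV fE) S).
Proof.
  intros Hf Huc Hconn R Hent Heq Hfin Hcomp v w Hv Hw.
  assert (HQ : quotient_path_connected S
                 (fun x y => R (gmap fV fE x) (gmap fV fE y))).
  { apply Hconn.
    - exact (sub_entourage_pullback Huc Hent).
    - exact (equiv_on_pullback Heq).
    - exact (finite_classes_on_pullback Hfin).
    - exact (compatible_on_pullback Hf Hcomp). }
  destruct Hv as [[v0 | e] [Sv Fv]]; [| discriminate].
  destruct Hw as [[w0 | e] [Sw Fw]]; [| discriminate].
  injection Fv as <-. injection Fw as <-.
  destruct (HQ v0 w0 Sv Sw) as [l Hl].
  exists (map fE l). apply walk_map; auto.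
Qed.

Theorem mainTheorem2 (G : graph) (U : rel (pt G) -> Prop)
  (HG : cofinite_graph U) (S : pt G -> Prop) (HS : subgraph S) :
  (path_connected S -> cofinitely_connected U S) /\
  (cofinitely_connected U S -> cofinitely_connected U (closure U S)) /\
  (forall (H : graph) (UH : rel (pt H) -> Prop) (fV : gV G -> gV H)
     (fE : gE G -> gE H),
     cofinite_graph UH -> graph_map fV fE ->
     unif_continuous U UH (gmap fV fE) ->
     cofinitely_connected U S ->
     cofinitely_connected UH (image (gmap fV fE) S)).
Proof.
  destruct HG as [HU _].
  split; [| split].
  - exact (path_connected_cofinitely_connected (U := U) HS).
  - exact (cofinitely_connected_closure HU HS).
  - intros H UH fV fE _ Hf Huc.
    exact (cofinitely_connected_image Hf Huc).
Qed.
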